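(* Let $b$ and $c$ be coprime positive integers with $c$ odd. Then for every integer $q\geq1$ and all $y,z\in\mathbb{R}$, $$2bc^{q}S^{(3)}_{q}(b,c:y,z)-qcb^{q}S^{(4)}_{q}(c,b:z,y)=2\sum_{h=0}^{q}\binom{q}{h}b^{q+1-h}c^{h}\mathcal{E}_{q-h}(z)\mathcal{B}_{h}(y).$$
   Context: $B_n(x)$ is the $n$th Bernoulli polynomial ($\frac{te^{xt}}{e^t-1}=\sum B_n(x)\frac{t^n}{n!}$) and $\mathcal{B}_n(x)=B_n(x-[x])$ the $n$th Bernoulli function ($[x]$ the largest integer $\le x$; $\mathcal{B}_0\equiv1$). $E_n(x)$ is the $n$th Euler polynomial ($\frac{2e^{xt}}{e^t+1}=\sum E_n(x)\frac{t^n}{n!}$), and the Euler function $\mathcal{E}_n$ ($n\ge0$) is defined by $\mathcal{E}_n(x)=E_n(x)$ for $0\le x<1$ and $\mathcal{E}_n(x+m)=(-1)^m\mathcal{E}_n(x)$ for $m\in\mathbb{Z}$. For positive integers $b,c$, an integer $q\ge1$ and real $y,z$, define $$S^{(3)}_{q}(b,c:y,z)=\sum_{\mu=0}^{c-1}(-1)^{\mu}\mathcal{B}_{q}\Big(b\frac{\mu+z}{c}+y\Big)\mathcal{E}_{0}\Big(\frac{\mu+z}{c}\Big),\qquad S^{(4)}_{q}(c,b:z,y)=\sum_{\mu=0}^{b-1}\mathcal{E}_{q-1}\Big(c\frac{\mu+y}{b}+z\Big)\mathcal{E}_{0}\Big(\frac{\mu+y}{b}\Big).$$ *)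

From HB Require Import structures.
From mathcomp Require Import all_boot all_order all_algebra.
From mathcomp Require Import reals.
Set Implicit Arguments. Unset Strict Implicit. Unset Printing Implicit Defensive.
Import Order.TTheory GRing.Theory Num.Theory.
Local Open Scope ring_scope.

Section Defs.
Variable R : realType.

(* [B_0(x); ...; B_n(x)], using the identity (from t e^{xt} = (e^t-1) sum B_k(x) t^k/k!)
   sum_{k=0}^{n} C(n+1,k) B_k(x) = (n+1) x^n. *)
Fixpoint bern_seq (n : nat) (x : R) : seq R :=
  match n with
  | 0 => [:: 1]
  | n'.+1 => let s := bern_seq n' x in
      rcons s (x ^+ n'.+1 -
        (n'.+2)%:R^-1 * \sum_(k < n'.+1) 'C(n'.+2, k)%:R * nth 0 s k)
  end.

Definition bernoulli_poly (n : nat) (x : R) : R := nth 0 (bern_seq n x) n.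

(* [E_0(x); ...; E_n(x)], using the identity (from 2e^{xt} = (e^t+1) sum E_k(x) t^k/k!)
   sum_{k=0}^{n} C(n,k) E_k(x) + E_n(x) = 2 x^n. *)
Fixpoint euler_seq (n : nat) (x : R) : seq R :=
  match n with
  | 0 => [:: 1]
  | n'.+1 => let s := euler_seq n' x in
      rcons s (x ^+ n'.+1 -
        2^-1 * \sum_(k < n'.+1) 'C(n'.+1, k)%:R * nth 0 s k)
  end.

Definition euler_poly (n : nat) (x : R) : R := nth 0 (euler_seq n x) n.

Definition bernoulli_fun (n : nat) (x : R) : R :=
  bernoulli_poly n (x - (Num.floor x)%:~R).

Definition euler_fun (n : nat) (x : R) : R :=
  (-1) ^ (Num.floor x) * euler_poly n (x - (Num.floor x)%:~R).

Definition S3 (q b c : nat) (y z : R) : R :=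
  \sum_(mu < c) (-1) ^+ mu *
    bernoulli_fun q (b%:R * ((mu%:R + z) / c%:R) + y) *
    euler_fun 0 ((mu%:R + z) / c%:R).

Definition S4 (q c b : nat) (z y : R) : R :=
  \sum_(mu < b)
    euler_fun q.-1 (c%:R * ((mu%:R + y) / b%:R) + z) *
    euler_fun 0 ((mu%:R + y) / b%:R).

End Defs.

From HB Require Import structures.
From mathcomp Require Import all_boot all_order all_algebra.
From mathcomp Require Import reals.
From mathcomp Require Import ring lra zify.
Import Order.TTheory GRing.Theory Num.Theory.
Set Implicit Arguments. Unset Strict Implicit. Unset Printing Implicit Defensive.
Local Open Scope ring_scope.

(* Multiply the exponential generating functions (in q) of both sides by
   (e^{ct} - 1)(e^{bt} + 1).  The generating functions of the Bernoulli and
   Euler polynomials turn the right side into 4bc E_0(z) t e^{(c{y} + b{z})t}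
   and the left side into 2bc t times a signed sum of exponentials e^{(θ + j)t},
   where θ = {bz + cy} and the integers j are read off from the fractional
   parts occurring in S3 and S4.  Comparing coefficients of t^k leaves the
   polynomial identity (X^b + 1) A - (X^c - 1) B = 2 E_0(z) X^T evaluated by
   X^j |-> (θ + j)^k.  Its two sides agree modulo X^c - 1 and modulo X^b + 1,
   which are coprime because c is odd, and their difference has smaller degree
   than (X^b + 1)(X^c - 1), so it vanishes.  All series are truncated, i.e.
   computed modulo t^N. *)

Section BernoulliEulerRecurrences.
Variable R : realType.

Lemma size_bern_seq n (x : R) : size (bern_seq n x) = n.+1.
Proof. by elim: n => //= n IH; rewrite size_rcons IH. Qed.

Lemma nth_bern_seq n k (x : R) : (k <= n)%N -> nth 0 (bern_seq n x) k = bernoulli_poly k x.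
Proof.
elim: n => [|n IH]; first by rewrite leqn0 => /eqP ->.
rewrite leq_eqVlt => /orP[/eqP -> //|]; rewrite ltnS => hk.
by rewrite /= nth_rcons size_bern_seq ltnS hk IH.
Qed.

Lemma bernoulli_poly_sum n (x : R) :
  \sum_(k < n.+1) 'C(n.+1, k)%:R * bernoulli_poly k x = n.+1%:R * x ^+ n.
Proof.
case: n => [|n]; first by rewrite big_ord1 /bernoulli_poly /= !mulr1.
have Bn1 : bernoulli_poly n.+1 x = x ^+ n.+1 -
    n.+2%:R^-1 * \sum_(k < n.+1) 'C(n.+2, k)%:R * bernoulli_poly k x.
  rewrite {1}/bernoulli_poly /= nth_rcons size_bern_seq ltnn eqxx.
  by congr (_ - _ * _); apply: eq_bigr => k _; rewrite nth_bern_seq // -ltnS.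
rewrite big_ord_recr /= Bn1 binSn mulrBr mulrA divff ?pnatr_eq0 // mul1r; ring.
Qed.

Lemma size_euler_seq n (x : R) : size (euler_seq n x) = n.+1.
Proof. by elim: n => //= n IH; rewrite size_rcons IH. Qed.

Lemma nth_euler_seq n k (x : R) : (k <= n)%N -> nth 0 (euler_seq n x) k = euler_poly k x.
Proof.
elim: n => [|n IH]; first by rewrite leqn0 => /eqP ->.
rewrite leq_eqVlt => /orP[/eqP -> //|]; rewrite ltnS => hk.
by rewrite /= nth_rcons size_euler_seq ltnS hk IH.
Qed.

Lemma euler_poly_sum n (x : R) :
  \sum_(k < n.+1) 'C(n, k)%:R * euler_poly k x + euler_poly n x = 2 * x ^+ n.
Proof.
case: n => [|n]; first by rewrite big_ord1 /euler_poly /= !mulr1 -[2]/(1 + 1).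
have En1 : euler_poly n.+1 x = x ^+ n.+1 -
    2^-1 * \sum_(k < n.+1) 'C(n.+1, k)%:R * euler_poly k x.
  rewrite {1}/euler_poly /= nth_rcons size_euler_seq ltnn eqxx.
  by congr (_ - _ * _); apply: eq_bigr => k _; rewrite nth_euler_seq // -ltnS.
rewrite big_ord_recr /= binn En1.
have two_neq0 : (2 : R) != 0 by rewrite pnatr_eq0.
by field.
Qed.

End BernoulliEulerRecurrences.

Section Truncation.
Variable F : nzRingType.
Implicit Types p q : {poly F}.

Lemma take_polyM N p q :
  take_poly N (p * q) = take_poly N (take_poly N p * take_poly N q).
Proof.
apply/polyP => k; rewrite !coef_take_poly; case: ltnP => // hk.
rewrite !coefM; apply: eq_bigr => i _.
rewrite !coef_take_poly (leq_ltn_trans (leq_subr _ _) hk).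
by rewrite (leq_ltn_trans (leq_ord i) hk).
Qed.

Lemma take_poly_idem N p : take_poly N (take_poly N p) = take_poly N p.
Proof. exact/take_poly_id/size_take_poly. Qed.

Lemma take_polyMl N p q : take_poly N (take_poly N p * q) = take_poly N (p * q).
Proof. by rewrite [RHS]take_polyM take_polyM take_poly_idem. Qed.

Lemma take_polyMr N p q : take_poly N (p * take_poly N q) = take_poly N (p * q).
Proof. by rewrite [RHS]take_polyM take_polyM take_poly_idem. Qed.

End Truncation.

Lemma take_poly_cancel (F : idomainType) N (p q : {poly F}) :
  p`_0 = 0 -> p`_1 != 0 -> take_poly N.+1 (p * q) = 0 -> take_poly N q = 0.
Proof.
move=> p0 p1 /polyP pq0; apply/polyP => k; rewrite coef_take_poly coef0.
case: ltnP => // hk; elim/ltn_ind: k hk => k IH hk.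
have := pq0 k.+1; rewrite coef_take_poly ltnS hk coef0 coefM.
rewrite big_ord_recl big_ord_recl p0 mul0r add0r /= subSS subn0 big1.
  by rewrite addr0 => /eqP; rewrite mulf_eq0 (negbTE p1) => /eqP.
move=> [i hi] _; rewrite /bump /= !add1n subSS IH ?mulr0 //; lia.
Qed.

Section TruncatedEGF.
Variable F : numFieldType.
Implicit Types (f g : nat -> F) (a b : F).

Definition egf N f : {poly F} := \poly_(k < N) (f k / k`!%:R).

Definition texp N a : {poly F} := egf N (fun k => a ^+ k).

Lemma eq_egf N f g : (forall k, (k < N)%N -> f k = g k) -> egf N f = egf N g.
Proof. by move=> fg; apply/polyP => k; rewrite !coef_poly; case: ifP => // /fg ->. Qed.

Lemma egfZ N a f : egf N (fun k => a * f k) = a *: egf N f.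
Proof.
by apply/polyP => k; rewrite coefZ !coef_poly; case: ifP; rewrite ?mulr0 ?mulrA.
Qed.

Lemma egfD N f g : egf N (fun k => f k + g k) = egf N f + egf N g.
Proof.
by apply/polyP => k; rewrite coefD !coef_poly; case: ifP; rewrite ?addr0 ?mulrDl.
Qed.

Lemma egfB N f g : egf N (fun k => f k - g k) = egf N f - egf N g.
Proof.
by apply/polyP => k; rewrite coefB !coef_poly; case: ifP; rewrite ?subr0 ?mulrBl.
Qed.

Lemma egf_sum N (I : Type) (r : seq I) (P : pred I) (f : I -> nat -> F) :
  egf N (fun k => \sum_(i <- r | P i) f i k) = \sum_(i <- r | P i) egf N (f i).
Proof.
apply/polyP => k; rewrite coef_sum coef_poly.
case: ifP => hk; last by rewrite big1 // => i _; rewrite coef_poly hk.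
by rewrite mulr_suml; apply: eq_bigr => i _; rewrite coef_poly hk.
Qed.

Lemma factr_neq0 k : (k`!%:R : F) != 0.
Proof. by rewrite pnatr_eq0 -lt0n fact_gt0. Qed.

Lemma egfM N f g : take_poly N (egf N f * egf N g) =
  egf N (fun k => \sum_(h < k.+1) 'C(k, h)%:R * (f h * g (k - h)%N)).
Proof.
apply/polyP => k; rewrite coef_take_poly coef_poly; case: ifP => // hk.
rewrite coefM mulr_suml; apply: eq_bigr => -[h /=]; rewrite ltnS => hh _.
rewrite !coef_poly (leq_ltn_trans hh hk) (leq_ltn_trans (leq_subr _ _) hk).
have binf : 'C(k, h)%:R * (h`!%:R * (k - h)`!%:R) = k`!%:R :> F.
  by rewrite -!natrM bin_fact.
rewrite -binf; field.
by rewrite !factr_neq0 /= pnatr_eq0 -lt0n bin_gt0.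
Qed.

Lemma texpD N a b : take_poly N (texp N a * texp N b) = texp N (a + b).
Proof.
rewrite egfM; apply: eq_egf => k _; rewrite addrC exprDn.
by apply: eq_bigr => h _; rewrite mulr_natl mulrC.
Qed.

Lemma take_poly_mulX_egf N f :
  take_poly N ('X * egf N f) = egf N (fun k => k%:R * f k.-1).
Proof.
apply/polyP => -[|k]; rewrite coef_take_poly coef_poly.
  by rewrite coefXM !mul0r if_same.
case: ifP => // hk; rewrite coefXM coef_poly (ltn_trans _ hk) //= factS natrM.
by field; rewrite factr_neq0 addrC natr1 pnatr_eq0.
Qed.

Lemma texp_sub1 N a : (0 < N)%N -> texp N a - 1 = egf N (fun k => a ^+ k - (k == 0)%:R).
Proof.
move=> N0; apply/polyP => k; rewrite coefB coef1 !coef_poly.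
case: k => [|k]; first by rewrite N0 fact0 !divr1.
by case: ifP => _; rewrite /= !subr0.
Qed.

Lemma texp_add1 N a : (0 < N)%N -> texp N a + 1 = egf N (fun k => a ^+ k + (k == 0)%:R).
Proof.
move=> N0; apply/polyP => k; rewrite coefD coef1 !coef_poly.
case: k => [|k]; first by rewrite N0 fact0 !divr1.
by case: ifP => _; rewrite /= !addr0.
Qed.

End TruncatedEGF.

Section Floor.
Variable R : realType.
Implicit Types (x : R).
Definition frac x := x - (Num.floor x)%:~R.

Lemma frac_ge0 x : 0 <= frac x.
Proof. by rewrite subr_ge0 floor_le. Qed.

Lemma frac_lt1 x : frac x < 1.
Proof. by have := floorD1_gt x; rewrite intrD /frac; lra. Qed.

Lemma floor_divz (m d : nat) x : (0 < d)%N ->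
  Num.floor ((m%:R + x) / d%:R) = ((m%:Z + Num.floor x) %/ d%:Z)%Z.
Proof.
move=> d0; apply: floor_def.
set j := m%:Z + Num.floor x; have jE := divz_eq j d%:Z.
set t := (j %/ d%:Z)%Z in jE *; set r := (j %% d%:Z)%Z in jE.
have r0 : 0 <= r by apply: modz_ge0; rewrite eqz_nat -lt0n.
have rd : r + 1 <= d%:Z by rewrite lezD1 ltz_pmod // ltz_nat.
have r0R : 0 <= r%:~R :> R by rewrite ler0z.
have rdR : r%:~R + 1 <= d%:R :> R by rewrite -[d%:R]/(d%:Z%:~R) -[1]/(1%:~R) -intrD ler_int.
have dR : 0 < d%:R :> R by rewrite ltr0n.
have xE : m%:~R + x = t%:~R * d%:R + r%:~R + frac x.
  by rewrite /frac -[d%:R]/(d%:Z%:~R) -intrM -intrD -jE /j intrD -pmulrn; ring.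
have := frac_ge0 x; have := frac_lt1 x.
rewrite ler_pdivlMr // ltr_pdivrMr // xE intrD mulrDl mul1r; lra.
Qed.

Lemma int_bounds (th : R) (m : int) (B : nat) :
  0 <= th -> th < 1 -> 0 <= th + m%:~R -> th + m%:~R < B%:R -> 0 <= m < B%:Z.
Proof.
move=> th0 th1 lo hi; apply/andP; split.
  have : (-1)%:~R < m%:~R :> R by rewrite (_ : (-1)%:~R = -1 :> R) //; lra.
  by rewrite ltr_int; lia.
have : m%:~R < B%:Z%:~R :> R by rewrite -pmulrn; lra.
by rewrite ltr_int.
Qed.
End Floor.

Section BernoulliEulerEGF.
Variable R : realType.
Implicit Types (s u x : R).

Lemma euler_fun0 x : euler_fun 0 x = (-1) ^ Num.floor x.
Proof. by rewrite /euler_fun /euler_poly mulr1. Qed.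

Lemma euler_funE k x : euler_fun k x = euler_fun 0 x * euler_poly k (frac x).
Proof. by rewrite euler_fun0. Qed.

Lemma bernoulli_egf N s u :
  take_poly N (egf N (fun k => s ^+ k * bernoulli_poly k u) * (texp N s - 1)) =
  s *: take_poly N ('X * texp N (s * u)).
Proof.
case: N => [|N]; first by rewrite !take_poly0l scaler0.
rewrite texp_sub1 // egfM take_poly_mulX_egf -egfZ; apply: eq_egf => -[_|k _].
  by rewrite big_ord1 /=; ring.
rewrite big_ord_recr /= subnn subrr !mulr0 addr0.
transitivity (s ^+ k.+1 * \sum_(h < k.+1) 'C(k.+1, h)%:R * bernoulli_poly h u).
  rewrite mulr_sumr; apply: eq_bigr => -[h /= hh] _.
  have -> : s ^+ k.+1 = s ^+ h * s ^+ (k.+1 - h) by rewrite -exprD subnKC // ltnW.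
  by rewrite subn_eq0 leqNgt hh subr0; ring.
by rewrite bernoulli_poly_sum exprMn exprS; ring.
Qed.

Lemma euler_egf N s u :
  take_poly N (egf N (fun k => s ^+ k * euler_poly k u) * (texp N s + 1)) =
  2 *: texp N (s * u).
Proof.
case: N => [|N].
  by apply/polyP => k; rewrite coef_take_poly coefZ coef_poly /= mulr0.
rewrite texp_add1 // egfM /texp -egfZ; apply: eq_egf => k _.
transitivity (s ^+ k * (\sum_(h < k.+1) 'C(k, h)%:R * euler_poly h u + euler_poly k u)).
  rewrite big_ord_recr [in RHS]big_ord_recr /= subnn binn !mulrDr mulr_sumr -addrA.
  congr (_ + _); last by rewrite eqxx expr0 mul1r; ring.
  apply: eq_bigr => -[h /= hh] _.
  have -> : s ^+ k = s ^+ h * s ^+ (k - h) by rewrite -exprD subnKC // ltnW.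
  by rewrite subn_eq0 leqNgt hh addr0; ring.
by rewrite euler_poly_sum exprMn; ring.
Qed.

Lemma bernoulli_fun_egf N s x :
  take_poly N (egf N (fun k => s ^+ k * bernoulli_fun k x) * (texp N s - 1)) =
  s *: take_poly N ('X * texp N (s * frac x)).
Proof. exact: bernoulli_egf. Qed.

Lemma euler_fun_egf N s x :
  take_poly N (egf N (fun k => s ^+ k * euler_fun k x) * (texp N s + 1)) =
  (2 * euler_fun 0 x) *: texp N (s * frac x).
Proof.
have -> : egf N (fun k => s ^+ k * euler_fun k x) =
    euler_fun 0 x *: egf N (fun k => s ^+ k * euler_poly k (frac x)).
  by rewrite -egfZ; apply: eq_egf => k _; rewrite euler_funE; ring.
by rewrite -scalerAl take_polyZ euler_egf scalerA mulrC.
Qed.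

End BernoulliEulerEGF.

Lemma sum_ord_shift_mod (V : nmodType) (c : nat) (a : int) (G : nat -> V) :
  \sum_(mu < c) G `|((mu%:Z + a) %% c%:Z)%Z|%N = \sum_(mu < c) G mu.
Proof.
case: c => [|c]; first by rewrite !big_ord0.
have rot_lt (mu : 'I_c.+1) : (`|((mu%:Z + a) %% c.+1%:Z)%Z| < c.+1)%N.
  by rewrite -ltz_nat gez0_abs ?modz_ge0 ?ltz_pmod.
pose rot (mu : 'I_c.+1) := Ordinal (rot_lt mu).
have rot_inj : injective rot.
  move=> mu1 mu2 /(congr1 val) /= /(congr1 Posz).
  rewrite !gez0_abs ?modz_ge0 // => /eqP.
  by rewrite eqz_modDr !modz_small ?ltz_nat ?ltn_ord // => /eqP[] /val_inj.
by rewrite [RHS](reindex_inj rot_inj).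
Qed.

Lemma signz_mod2 (R : unitRingType) (a a' : int) :
  (a = a' %[mod 2])%Z -> ((-1) ^ a : R) = (-1) ^ a'.
Proof.
move/eqP; rewrite eqz_mod_dvd => /dvdzP[k /eqP]; rewrite subr_eq => /eqP ->.
by rewrite exprzDr ?unitrN1 // mulrC -exprz_exp -exprnP sqrrN expr1n exp1rz mul1r.
Qed.

Lemma odd_modz2 (c : nat) : odd c -> (c%:Z %% 2 = 1)%Z.
Proof. by move=> oc; rewrite -[2]/(2%N%:Z) modz_nat modn2 oc. Qed.

Section XnDivisibility.
Variable F : fieldType.
Implicit Types (A B D G p q : {poly F}).

Lemma dvdp_Xn_subC_shift (a : F) (n e j : nat) :
  ('X^n - a%:P) %| 'X^(e + j * n) - a ^+ j *: 'X^e.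
Proof.
have -> : 'X^(e + j * n) - a ^+ j *: 'X^e = (('X^n) ^+ j - a%:P ^+ j) * 'X^e.
  by rewrite mulrBl -exprM mulnC -exprD addnC -mul_polyC rmorphXn.
by apply: dvdp_mulr; rewrite subrXX dvdp_mulIl.
Qed.

Lemma dvdp_Xn_subC_shiftz (a : F) (n e1 e2 : nat) (k : int) : a != 0 ->
  e1%:Z = e2%:Z + k * n%:Z -> ('X^n - a%:P) %| 'X^e1 - a ^ k *: 'X^e2.
Proof.
move=> a0; case: k => j h.
  by rewrite (_ : e1 = e2 + j * n)%N ?dvdp_Xn_subC_shift //; lia.
have -> : e2 = (e1 + j.+1 * n)%N by move: h; rewrite NegzE; lia.
set s := a ^+ j.+1; have s0 : s != 0 by rewrite expf_neq0.
have -> : 'X^e1 - a ^ Negz j *: 'X^(e1 + j.+1 * n) =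
    (- s^-1) *: ('X^(e1 + j.+1 * n) - s *: 'X^e1).
  by rewrite scalerBr scalerA mulNr mulVf // scaleN1r opprK addrC scaleNr.
by rewrite dvdpZr ?oppr_eq0 ?invr_eq0 // dvdp_Xn_subC_shift.
Qed.

Lemma coprimep_Xn_add1_Xn_sub1 b c : (2 : F) != 0 -> odd c ->
  coprimep ('X^b + 1 : {poly F}) ('X^c - 1).
Proof.
move=> two0 oc.
have Xbc_coprime : coprimep ('X^(c * b) + 1 : {poly F}) ('X^(c * b) - 1).
  apply/Bezout_coprimepP; exists (2^-1%:P, - 2^-1%:P); rewrite /= mulNr -mulrBr.
  rewrite (_ : _ - _ = 2%:R%:P); last by rewrite polyC_natr; ring.
  by rewrite -polyCM mulVf // polyC1 eqpxx.
have dvd_c : ('X^c - 1) %| ('X^(c * b) - 1 : {poly F}).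
  by have := dvdp_Xn_subC_shift 1 c 0 b; rewrite polyC1 expr1n scale1r add0n mulnC.
have dvd_b : ('X^b + 1) %| ('X^(c * b) + 1 : {poly F}).
  have := dvdp_Xn_subC_shift (-1) b 0 c.
  by rewrite polyCN opprK -signr_odd oc expr1 scaleN1r opprK add0n.
exact: coprimep_dvdr dvd_b (coprimep_dvdl dvd_c Xbc_coprime).
Qed.

Lemma coprimep_dvdp_size_eq0 p q D : coprimep p q -> p %| D -> q %| D ->
  (size D < size (p * q)%R)%N -> D = 0.
Proof.
move=> cpq pD qD; apply: contraTeq => D0; rewrite -leqNgt dvdp_leq //.
by rewrite Gauss_dvdp // pD.
Qed.

Lemma Xn_add1_Xn_sub1_eq b c A B G : (2 : F) != 0 -> (0 < b)%N -> odd c ->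
  (size A <= c)%N -> (size B <= b)%N -> (size G <= b + c)%N ->
  ('X^c - 1) %| ('X^b + 1) * A - G -> ('X^b + 1) %| ('X^c - 1) * B + G ->
  ('X^b + 1) * A - ('X^c - 1) * B = G.
Proof.
move=> two0 b0 oc sA sB sG dA dB; apply/eqP; rewrite -subr_eq0; apply/eqP.
have sXb : size ('X^b + 1 : {poly F}) = b.+1 by rewrite -polyC1 size_XnaddC.
have sXc : size ('X^c - 1 : {poly F}) = c.+1 by rewrite size_Xn_sub_1 // odd_gt0.
apply: (coprimep_dvdp_size_eq0 (coprimep_Xn_add1_Xn_sub1 b two0 oc)).
- have -> : ('X^b + 1) * A - ('X^c - 1) * B - G =
      ('X^b + 1) * A - (('X^c - 1) * B + G) by ring.
  by rewrite dvdp_sub // dvdp_mulIl.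
- have -> : ('X^b + 1) * A - ('X^c - 1) * B - G =
      (('X^b + 1) * A - G) - ('X^c - 1) * B by ring.
  by rewrite dvdp_sub // dvdp_mulIl.
rewrite size_mul -?size_poly_eq0 ?sXb ?sXc // addnS /= addSn ltnS.
have sXbA : (size (('X^b + 1) * A)%R <= b + c)%N.
  by apply: leq_trans (size_polyMleq _ _) _; rewrite sXb addSn leq_add.
have sXcB : (size (('X^c - 1) * B)%R <= b + c)%N.
  by apply: leq_trans (size_polyMleq _ _) _; rewrite sXc addSn addnC leq_add.
do 2 (apply: leq_trans (size_polyD _ _) _; rewrite size_polyN geq_max ?sG ?sXcB ?andbT //).
Qed.

Lemma mulXn_add1_sum_sign b T n :
  ('X^b + 1) * \sum_(j < n) (-1) ^+ j *: 'X^(T + b * j) =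
  'X^T - (-1) ^+ n *: 'X^(T + b * n) :> {poly F}.
Proof.
elim: n => [|n IH]; first by rewrite big_ord0 mulr0 muln0 addn0 scale1r subrr.
have -> : 'X^(T + b * n.+1) = 'X^b * 'X^(T + b * n) :> {poly F}.
  by rewrite -exprD mulnS addnCA.
rewrite big_ord_recr /= mulrDr IH -!mul_polyC exprS rmorphM /= polyCN polyC1; ring.
Qed.

Lemma mulXn_sub1_sum c T n :
  ('X^c - 1) * \sum_(i < n) 'X^(T + c * i) = 'X^(T + c * n) - 'X^T :> {poly F}.
Proof.
elim: n => [|n IH]; first by rewrite big_ord0 mulr0 muln0 addn0 subrr.
have -> : 'X^(T + c * n.+1) = 'X^c * 'X^(T + c * n) :> {poly F}.
  by rewrite -exprD mulnS addnCA.
by rewrite big_ord_recr /= mulrDr IH; ring.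
Qed.

Lemma dvdp_sum_ord (d : {poly F}) n (P : 'I_n -> {poly F}) :
  (forall i, d %| P i) -> d %| \sum_(i < n) P i.
Proof. by move=> dP; apply: (big_ind (fun p => d %| p)) => // p q; apply: dvdp_add. Qed.

Lemma dvdp_Xn_sub1_signed_sum (b c T : nat) (z0 : int) (k : 'I_c -> int)
    (eps : 'I_c -> F) (m : 'I_c -> nat) : odd c ->
  (forall mu : 'I_c, (m mu)%:Z = T%:Z + b%:Z * (mu%:Z + z0) + c%:Z * k mu) ->
  (forall mu : 'I_c, eps mu = (-1) ^+ mu * (-1) ^ ((mu%:Z + z0) %/ c%:Z)%Z) ->
  ('X^c - 1) %| ('X^b + 1) * \sum_mu eps mu *: 'X^(m mu) - (2 * (-1) ^ z0) *: 'X^T.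
Proof.
(* Writing mu + z0 = t c + r with 0 <= r < c, the mu-th term is congruent to
   (-1)^z0 (-1)^r X^(T + b r), and r runs through [0, c) exactly once. *)
move=> oc hm heps; set s : F := (-1) ^ z0; have c2 := odd_modz2 oc.
pose G r : {poly F} := (-1) ^+ r *: 'X^(T + b * r).
have c0 : c%:Z != 0 by rewrite eqz_nat -lt0n odd_gt0.
have termwise (mu : 'I_c) :
    ('X^c - 1) %| eps mu *: 'X^(m mu) - s *: G `|((mu%:Z + z0) %% c%:Z)%Z|%N.
  set j := mu%:Z + z0; set r := (j %% c%:Z)%Z; set t := (j %/ c%:Z)%Z.
  have jE : j = t * c%:Z + r := divz_eq j c%:Z.
  have rE : `|r|%:Z = r by rewrite gez0_abs // modz_ge0.
  have -> : s *: G `|r|%N = eps mu *: 'X^(T + b * `|r|).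
    rewrite /G scalerA heps !exprnP rE /s -!exprzDr ?unitrN1 //.
    by congr (_ *: _); apply: signz_mod2; rewrite -/j -/t; move: jE c2; lia.
  rewrite -scalerBr -mul_polyC dvdp_mull //.
  have := @dvdp_Xn_subC_shiftz 1 c (m mu) (T + b * `|r|) (b%:Z * t + k mu) (oner_neq0 F).
  rewrite exp1rz scale1r polyC1; apply.
  by rewrite hm PoszD PoszM rE; move: jE; rewrite -/j; lia.
have sum_dvd : ('X^c - 1) %|
    \sum_mu eps mu *: 'X^(m mu) - s *: \sum_(r < c) G r.
  rewrite -(@sum_ord_shift_mod _ c z0 G) scaler_sumr -sumrB.
  exact: dvdp_sum_ord.
have alt_sum : ('X^b + 1) * \sum_(r < c) G r = 'X^T + 'X^(T + b * c).
  by rewrite mulXn_add1_sum_sign -signr_odd oc scaleN1r opprK.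
have -> : ('X^b + 1) * \sum_mu eps mu *: 'X^(m mu) - (2 * s) *: 'X^T =
    ('X^b + 1) * (\sum_mu eps mu *: 'X^(m mu) - s *: \sum_(r < c) G r) +
    s *: ('X^(T + b * c) - 'X^T).
  by rewrite mulrBr -scalerAr alt_sum -!mul_polyC polyCM; ring.
rewrite dvdp_add ?dvdp_mull // -mul_polyC dvdp_mull //.
by have := dvdp_Xn_subC_shift 1 c T b; rewrite polyC1 expr1n scale1r.
Qed.

Lemma dvdp_Xn_add1_signed_sum (b c T : nat) (y0 z0 : int) (V : 'I_b -> int)
    (del : 'I_b -> F) (n : 'I_b -> nat) : (0 < b)%N -> odd c ->
  (forall nu : 'I_b, (n nu)%:Z = T%:Z + c%:Z * (nu%:Z + y0) + b%:Z * (z0 - V nu)) ->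
  (forall nu : 'I_b, del nu = (-1) ^ ((nu%:Z + y0) %/ b%:Z)%Z * (-1) ^ V nu) ->
  ('X^b + 1) %| ('X^c - 1) * \sum_nu del nu *: 'X^(n nu) + (2 * (-1) ^ z0) *: 'X^T.
Proof.
(* Writing nu + y0 = t b + r with 0 <= r < b, the nu-th term is congruent to
   (-1)^z0 X^(T + c r), using X^b = -1 and the oddness of c. *)
move=> b0 oc hn hdel; set s : F := (-1) ^ z0; have c2 := odd_modz2 oc.
pose H i : {poly F} := 'X^(T + c * i).
have b0' : b%:Z != 0 by rewrite eqz_nat -lt0n.
have Xb1 : 'X^b + 1 = 'X^b - (-1)%:P :> {poly F} by rewrite polyCN polyC1 opprK.
have termwise (nu : 'I_b) :
    ('X^b + 1) %| del nu *: 'X^(n nu) - s *: H `|((nu%:Z + y0) %% b%:Z)%Z|%N.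
  set j := nu%:Z + y0; set r := (j %% b%:Z)%Z; set t := (j %/ b%:Z)%Z.
  have jE : j = t * b%:Z + r := divz_eq j b%:Z.
  have rE : `|r|%:Z = r by rewrite gez0_abs // modz_ge0.
  set e := c%:Z * t + z0 - V nu.
  have -> : s *: H `|r|%N = del nu *: ((-1) ^ e *: 'X^(T + c * `|r|)).
    rewrite scalerA hdel /s -!exprzDr ?unitrN1 //.
    by congr (_ *: _); apply: signz_mod2; rewrite -/j -/t /e; move: jE c2; lia.
  rewrite -scalerBr -mul_polyC dvdp_mull // Xb1.
  apply: dvdp_Xn_subC_shiftz; first by rewrite oppr_eq0 oner_eq0.
  by rewrite hn PoszD PoszM rE /e; move: jE; rewrite -/j; lia.
have sum_dvd : ('X^b + 1) %| \sum_nu del nu *: 'X^(n nu) - s *: \sum_(i < b) H i.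
  rewrite -(@sum_ord_shift_mod _ b y0 H) scaler_sumr -sumrB.
  exact: dvdp_sum_ord.
have -> : ('X^c - 1) * \sum_nu del nu *: 'X^(n nu) + (2 * s) *: 'X^T =
    ('X^c - 1) * (\sum_nu del nu *: 'X^(n nu) - s *: \sum_(i < b) H i) +
    s *: ('X^(T + c * b) - (-1) ^+ c *: 'X^T).
  rewrite mulrBr -scalerAr mulXn_sub1_sum -signr_odd oc expr1 scaleN1r.
  by rewrite -!mul_polyC polyCM; ring.
by rewrite dvdp_add ?dvdp_mull // -mul_polyC dvdp_mull // Xb1 dvdp_Xn_subC_shift.
Qed.

End XnDivisibility.

Section PowerSums.
Variable F : numFieldType.

Definition powsum (M k : nat) (th : F) (p : {poly F}) : F :=
  \sum_(i < M) p`_i * (th + i%:R) ^+ k.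

Fact powsum_is_linear M k th : linear_for *%R (powsum M k th).
Proof.
move=> a p q; rewrite /powsum mulr_sumr -big_split; apply: eq_bigr => i _.
by rewrite coefD coefZ mulrDl mulrA.
Qed.

HB.instance Definition _ M k th :=
  GRing.isLinear.Build F {poly F} F *%R (powsum M k th) (powsum_is_linear M k th).

Lemma powsum_Xn M k th j : (j < M)%N -> powsum M k th 'X^j = (th + j%:R) ^+ k.
Proof.
move=> jM; rewrite /powsum (bigD1 (Ordinal jM)) //= coefXn eqxx mul1r big1 ?addr0 //.
by move=> i; rewrite -val_eqE coefXn /= eq_sym => /negbTE ->; rewrite mul0r.
Qed.

Lemma size_sum_scale_Xn (I : finType) (n : nat) (a : I -> F) (e : I -> nat) :
  (forall i, e i < n)%N -> (size (\sum_i a i *: 'X^(e i))%R <= n)%N.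
Proof.
move=> en; apply: (big_ind (fun p : {poly F} => size p <= n)%N).
- by rewrite size_poly0.
- by move=> p q sp sq; apply: leq_trans (size_polyD _ _) _; rewrite geq_max sp.
by move=> i _; apply: leq_trans (size_scale_leq _ _) _; rewrite size_polyXn.
Qed.

Lemma alternating_power_sums (b c T : nat) (th s : F) (eps : 'I_c -> F)
    (m : 'I_c -> nat) (del : 'I_b -> F) (n : 'I_b -> nat) k :
  (0 < b)%N -> odd c -> (T < b + c)%N ->
  (forall mu, m mu < c)%N -> (forall nu, n nu < b)%N ->
  ('X^c - 1) %| ('X^b + 1) * \sum_mu eps mu *: 'X^(m mu) - (2 * s) *: 'X^T ->
  ('X^b + 1) %| ('X^c - 1) * \sum_nu del nu *: 'X^(n nu) + (2 * s) *: 'X^T ->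
  \sum_mu eps mu * ((th + (m mu)%:R + b%:R) ^+ k + (th + (m mu)%:R) ^+ k)
  - \sum_nu del nu * ((th + (n nu)%:R + c%:R) ^+ k - (th + (n nu)%:R) ^+ k)
  = 2 * s * (th + T%:R) ^+ k.
Proof.
move=> b0 oc Tbc mc nb dA dB.
have two0 : (2 : F) != 0 by rewrite pnatr_eq0.
have sG : (size ((2 * s) *: 'X^T : {poly F}) <= b + c)%N.
  by rewrite (leq_trans (size_scale_leq _ _)) // size_polyXn.
have := congr1 (powsum (b + c) k th) (Xn_add1_Xn_sub1_eq two0 b0 oc
  (size_sum_scale_Xn eps mc) (size_sum_scale_Xn del nb) sG dA dB).
rewrite linearZ /= powsum_Xn // => <-; rewrite !mulr_sumr linearB !linear_sum /=.
congr (_ - _); apply: eq_bigr => i _; rewrite -scalerAr linearZ /=.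
  rewrite mulrDl mul1r -exprD linearD /= !powsum_Xn ?natrD ?addrA 1?addrAC //.
    by rewrite ltn_add2l.
  exact: ltn_addl.
rewrite mulrBl mul1r -exprD linearB /= !powsum_Xn ?natrD ?addrA 1?addrAC //.
  by rewrite addnC ltn_add2r.
exact: ltn_addr.
Qed.
End PowerSums.

Section AlternatingFloorSums.
Variables (R : realType) (b c : nat) (y z : R).
Hypotheses (b_gt0 : (0 < b)%N) (c_odd : odd c).

Let w (mu : nat) : R := b%:R * ((mu%:R + z) / c%:R) + y.
Let v (nu : nat) : R := c%:R * ((nu%:R + y) / b%:R) + z.
Let K : R := b%:R * z + c%:R * y.
Let T : int := Num.floor K - b%:Z * Num.floor z - c%:Z * Num.floor y.
Let m (mu : nat) : int := Num.floor K + b%:Z * mu%:Z - c%:Z * Num.floor (w mu).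
Let n (nu : nat) : int := Num.floor K + c%:Z * nu%:Z - b%:Z * Num.floor (v nu).

Let bR_neq0 : b%:R != 0 :> R. Proof. by rewrite pnatr_eq0 -lt0n. Qed.
Let cR_neq0 : c%:R != 0 :> R. Proof. by rewrite pnatr_eq0 -lt0n odd_gt0. Qed.

Let frac_w mu : c%:R * frac (w mu) = frac K + (m mu)%:~R.
Proof. by rewrite /frac /m /w /K !(intrD, intrN, intrM) -!pmulrn; field. Qed.

Let frac_v nu : b%:R * frac (v nu) = frac K + (n nu)%:~R.
Proof. by rewrite /frac /n /v /K !(intrD, intrN, intrM) -!pmulrn; field. Qed.

Let frac_yz : b%:R * frac z + c%:R * frac y = frac K + T%:~R.
Proof. by rewrite /frac /T /K !(intrD, intrN, intrM) -!pmulrn; ring. Qed.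

Let m_bounds mu : 0 <= m mu < c%:Z.
Proof.
apply: (int_bounds (frac_ge0 K) (frac_lt1 K)); rewrite -frac_w.
  by rewrite mulr_ge0 ?ler0n ?frac_ge0.
by rewrite -[X in _ < X]mulr1 ltr_pM2l ?ltr0n ?odd_gt0 ?frac_lt1.
Qed.

Let n_bounds nu : 0 <= n nu < b%:Z.
Proof.
apply: (int_bounds (frac_ge0 K) (frac_lt1 K)); rewrite -frac_v.
  by rewrite mulr_ge0 ?ler0n ?frac_ge0.
by rewrite -[X in _ < X]mulr1 ltr_pM2l ?ltr0n ?frac_lt1.
Qed.

Let T_bounds : 0 <= T < (b + c)%N%:Z.
Proof.
apply: (int_bounds (frac_ge0 K) (frac_lt1 K)); rewrite -frac_yz.
  by rewrite addr_ge0 // mulr_ge0 ?ler0n ?frac_ge0.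
have := frac_lt1 z; have := frac_lt1 y; have := frac_ge0 z; have := frac_ge0 y.
have : 0 <= b%:R :> R := ler0n _ _; have : 0 < c%:R :> R by rewrite ltr0n odd_gt0.
rewrite natrD; nra.
Qed.

Lemma alternating_floor_sums k :
  \sum_(mu < c) ((-1) ^+ mu * euler_fun 0 ((mu%:R + z) / c%:R)) *
      ((c%:R * frac (w mu) + b%:R) ^+ k + (c%:R * frac (w mu)) ^+ k)
  - \sum_(nu < b) (euler_fun 0 ((nu%:R + y) / b%:R) * euler_fun 0 (v nu)) *
      ((b%:R * frac (v nu) + c%:R) ^+ k - (b%:R * frac (v nu)) ^+ k)
  = 2 * euler_fun 0 z * (b%:R * frac z + c%:R * frac y) ^+ k.
Proof.
have [T0 Tbc] := andP T_bounds.
have c_gt0 := odd_gt0 c_odd.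
rewrite frac_yz -[T]ger0_norm // -natr_absz -(alternating_power_sums
  (eps := fun mu : 'I_c => (-1) ^+ mu * euler_fun 0 ((mu%:R + z) / c%:R))
  (m := fun mu : 'I_c => `|m mu|%N)
  (del := fun nu : 'I_b => euler_fun 0 ((nu%:R + y) / b%:R) * euler_fun 0 (v nu))
  (n := fun nu : 'I_b => `|n nu|%N) _ k b_gt0 c_odd).
- congr (_ - _); apply: eq_bigr => i _.
    by rewrite frac_w natr_absz ger0_norm //; case/andP: (m_bounds i).
  by rewrite frac_v natr_absz ger0_norm //; case/andP: (n_bounds i).
- by rewrite -ltz_nat gez0_abs.
- by move=> mu; rewrite -ltz_nat gez0_abs; case/andP: (m_bounds mu).
- by move=> nu; rewrite -ltz_nat gez0_abs; case/andP: (n_bounds nu).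
- rewrite euler_fun0; apply: (dvdp_Xn_sub1_signed_sum
    (k := fun mu : 'I_c => Num.floor y - Num.floor (w mu))) => // mu.
    by rewrite !gez0_abs ?(andP (m_bounds mu)).1 // /m /T; lia.
  by rewrite euler_fun0 floor_divz.
rewrite euler_fun0; apply: (dvdp_Xn_add1_signed_sum (y0 := Num.floor y)
  (V := fun nu : 'I_b => Num.floor (v nu))
  (del := fun nu : 'I_b => euler_fun 0 ((nu%:R + y) / b%:R) * euler_fun 0 (v nu))
  (n := fun nu : 'I_b => `|n nu|%N)) => // nu.
  by rewrite !gez0_abs ?(andP (n_bounds nu)).1 // /n /T; lia.
by rewrite !euler_fun0 floor_divz.
Qed.

End AlternatingFloorSums.

Section Corollary4.
Variables (R : realType) (b c : nat) (y z : R) (N : nat).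
Hypotheses (b_gt0 : (0 < b)%N) (c_odd : odd c).

Local Notation bR := (b%:R : R).
Local Notation cR := (c%:R : R).
Let w (mu : nat) : R := bR * ((mu%:R + z) / cR) + y.
Let v (nu : nat) : R := cR * ((nu%:R + y) / bR) + z.
Let PB x := egf N (fun k => cR ^+ k * bernoulli_fun k x).
Let PE x := egf N (fun k => bR ^+ k * euler_fun k x).
Let M := (texp N cR - 1) * (texp N bR + 1).

Let take_polyX_texpD (a a' : R) :
  take_poly N ('X * (texp N a * texp N a')) = take_poly N ('X * texp N (a + a')).
Proof. by rewrite -take_polyMr texpD. Qed.

Let M_PB x : take_poly N (M * PB x) =
  cR *: take_poly N ('X * (texp N (cR * frac x + bR) + texp N (cR * frac x))).
Proof.
rewrite /M mulrC mulrA -take_polyMl bernoulli_fun_egf -scalerAl take_polyZ.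
rewrite take_polyMl -mulrA mulrDr mulr1 mulrDr take_polyD take_polyX_texpD.
by rewrite -take_polyD -mulrDr.
Qed.

Let M_XPE x : take_poly N (M * take_poly N ('X * PE x)) =
  (2 * euler_fun 0 x) *:
  take_poly N ('X * (texp N (bR * frac x + cR) - texp N (bR * frac x))).
Proof.
have PE_egf : take_poly N ('X * (PE x * (texp N bR + 1))) =
    (2 * euler_fun 0 x) *: take_poly N ('X * texp N (bR * frac x)).
  by rewrite -take_polyMr euler_fun_egf -scalerAr take_polyZ.
rewrite take_polyMr (_ : M * _ = 'X * (PE x * (texp N bR + 1)) * (texp N cR - 1)).
  rewrite -take_polyMl PE_egf -scalerAl take_polyZ take_polyMl -mulrA mulrBr mulr1.
  by rewrite mulrBr linearB /= take_polyX_texpD -linearB -mulrBr.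
by rewrite /M; ring.
Qed.

Let M_PBPE : take_poly N (M * take_poly N (PB y * PE z)) =
  (2 * cR * euler_fun 0 z) *: take_poly N ('X * texp N (cR * frac y + bR * frac z)).
Proof.
rewrite take_polyMr (_ : M * _ = (PB y * (texp N cR - 1)) * (PE z * (texp N bR + 1))).
  rewrite take_polyM bernoulli_fun_egf euler_fun_egf -scalerAl -scalerAr !take_polyZ.
  rewrite scalerA take_polyMl -[_ * _ * texp _ _]mulrA take_polyX_texpD.
  by rewrite mulrCA mulrA.
by rewrite /M; ring.
Qed.

Let eps (mu : nat) := (-1) ^+ mu * euler_fun 0 ((mu%:R + z) / cR).
Let del (nu : nat) := euler_fun 0 ((nu%:R + y) / bR).

Let lhs k := 2 * bR * cR ^+ k * S3 k b c y z - k%:R * cR * bR ^+ k * S4 k c b z y.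
Let rhs k := 2 * \sum_(h < k.+1) 'C(k, h)%:R * bR ^+ (k.+1 - h) * cR ^+ h *
  euler_fun (k - h) z * bernoulli_fun h y.

Let egf_rhs : egf N rhs = (2 * bR) *: take_poly N (PB y * PE z).
Proof.
rewrite egfM -egfZ; apply: eq_egf => k _; rewrite /rhs !mulr_sumr.
apply: eq_bigr => -[h /=]; rewrite ltnS => hk _.
rewrite subSn // exprS.
move: (bernoulli_fun h y) (euler_fun (k - h) z) => B E; ring.
Qed.

Let egf_lhs : egf N lhs =
  (2 * bR) *: \sum_(mu < c) eps mu *: PB (w mu) -
  (cR * bR) *: \sum_(nu < b) del nu *: take_poly N ('X * PE (v nu)).
Proof.
rewrite egfB; congr (_ - _).
  under eq_bigr do rewrite -egfZ.
  rewrite -egf_sum -egfZ; apply: eq_egf => k _; rewrite /S3 !mulr_sumr.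
  apply: eq_bigr => mu _; rewrite /eps /w.
  move: (bernoulli_fun _ _) (euler_fun 0 _) => B E; ring.
under eq_bigr do rewrite take_poly_mulX_egf -egfZ.
rewrite -egf_sum -egfZ; apply: eq_egf => -[_|k _]; first by rewrite !mul0r big1 ?mulr0 // => nu _; rewrite !mul0r mulr0.
rewrite /S4 !mulr_sumr; apply: eq_bigr => nu _; rewrite /del /v exprS /=.
move: (euler_fun _ _) (euler_fun 0 _) => E E0; ring.
Qed.

Let alternating_texp_sums :
  \sum_(mu < c) eps mu *: (texp N (cR * frac (w mu) + bR) + texp N (cR * frac (w mu))) -
  \sum_(nu < b) (del nu * euler_fun 0 (v nu)) *:
    (texp N (bR * frac (v nu) + cR) - texp N (bR * frac (v nu))) =
  (2 * euler_fun 0 z) *: texp N (cR * frac y + bR * frac z).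
Proof.
rewrite /texp; under eq_bigr do rewrite -egfD -egfZ.
under [in X in _ - X]eq_bigr do rewrite -egfB -egfZ.
rewrite -!egf_sum -egfB -egfZ; apply: eq_egf => k _.
by rewrite [cR * frac y + _]addrC; apply: alternating_floor_sums.
Qed.

Let M_egf_lhs_rhs : take_poly N (M * egf N lhs) = take_poly N (M * egf N rhs).
Proof.
rewrite egf_rhs -scalerAr take_polyZ M_PBPE egf_lhs mulrBr linearB /=.
rewrite -!scalerAr !take_polyZ !mulr_sumr !take_poly_sum.
under eq_bigr do rewrite -scalerAr take_polyZ M_PB scalerA.
under [X in _ - _ *: X]eq_bigr => i _ do rewrite -scalerAr take_polyZ (M_XPE (v i)) scalerA.
rewrite [2 * cR]mulrC -mulrA -scalerA -[(2 * euler_fun 0 z) *: _]take_polyZ.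
rewrite [(2 * euler_fun 0 z) *: _]scalerAr -alternating_texp_sums mulrBr !mulr_sumr.
rewrite [take_poly N (_ - _)]linearB /= !take_poly_sum !scalerBr !scaler_sumr; congr (_ - _).
  by apply: eq_bigr => i _; rewrite -scalerAr take_polyZ !scalerA; congr (_ *: _); ring.
by apply: eq_bigr => i _; rewrite -scalerAr take_polyZ !scalerA; congr (_ *: _); ring.
Qed.

Let M_coef0 : (0 < N)%N -> M`_0 = 0.
Proof.
by move=> N0; rewrite coefM big_ord1 /= coefB coef1 coef_poly N0 fact0 divr1 subrr mul0r.
Qed.

Let M_coef1 : (1 < N)%N -> M`_1 = 2 * cR.
Proof.
move=> N1; rewrite coefM big_ord_recr big_ord1 /= !(coefB, coefD, coef1) !coef_poly.
rewrite N1 (ltn_trans _ N1) //= fact0 !expr0 !divr1.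
by rewrite subrr mul0r add0r subr0 expr1 mulrC.
Qed.

Lemma take_poly_egf_corollary4 : (1 < N)%N ->
  take_poly N.-1 (egf N lhs) = take_poly N.-1 (egf N rhs).
Proof.
move=> N1; apply/eqP; rewrite -subr_eq0 -linearB; apply/eqP.
apply: (take_poly_cancel (M_coef0 (ltnW N1))).
  by rewrite M_coef1 // mulf_neq0 ?pnatr_eq0 // -lt0n odd_gt0.
by rewrite prednK ?(ltnW N1) // mulrBr linearB /= M_egf_lhs_rhs subrr.
Qed.

End Corollary4.

Theorem corollary4 (R : realType) (b c : nat) (hb : (0 < b)%N) (hc : (0 < c)%N)
  (hbc : coprime b c) (hodd : odd c) (q : nat) (hq : (1 <= q)%N) (y z : R) :
  2 * b%:R * c%:R ^+ q * S3 q b c y z - q%:R * c%:R * b%:R ^+ q * S4 q c b z y =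
  2 * \sum_(h < q.+1) 'C(q, h)%:R * b%:R ^+ (q.+1 - h) * c%:R ^+ h *
        euler_fun (q - h) z * bernoulli_fun h y.
Proof.
have := take_poly_egf_corollary4 y z (N := q.+2) hb hodd isT.
move/(congr1 (fun p : {poly R} => p`_q * q`!%:R)).
rewrite /= !coef_take_poly ltnSn !coef_poly.
by rewrite ltnS leqnSn !divfK ?factr_neq0.
Qed.
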